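(* Let $\mathsf{C}\subset V$ be a proper cone, $\phi$ in the interior of $\mathsf{C}^*$, $k\ge1$, and $K_\phi=\mathsf{C}\cap\phi^{-1}(1)$. If $\gamma_k^\phi$ is entanglement-breaking, then $K_\phi$ is a polytope.
   Context: Proper cone: closed convex cone in a finite-dimensional real vector space, containing no line, not contained in a hyperplane; $\mathsf{C}^*$ is its dual cone. $\otimes_{\min}$: $\mathsf{C}_1\otimes_{\min}\mathsf{C}_2=\mathrm{conv}\{x\otimes y:x\in\mathsf{C}_1,y\in\mathsf{C}_2\}$, iterated. The $k$th reduction map $\gamma_k^\phi=\frac1k\sum_{j=1}^k\phi^{\otimes(j-1)}\otimes\mathrm{Id}_V\otimes\phi^{\otimes(k-j)}:V^{\otimes k}\to V$ is viewed as a tensor in $(V^* )^{\otimes k}\otimes V$; it is entanglement-breaking if this tensor belongs to $(\mathsf{C}^* )^{\otimes_{\min}k}\otimes_{\min}\mathsf{C}$. *)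

(* V = R^n realised as row vectors 'rV[R]_n,
   V^dual identified with 'rV[R]_n through the standard pairing. *)
From HB Require Import structures.
From mathcomp Require Import all_boot all_order all_algebra.
From mathcomp Require Import all_classical all_reals all_analysis.
Set Implicit Arguments. Unset Strict Implicit. Unset Printing Implicit Defensive.
Import Order.TTheory GRing.Theory Num.Theory numFieldNormedType.Exports.
Local Open Scope classical_set_scope.
Local Open Scope ring_scope.

Section Defs.
Variable R : realType.
Variable n : nat.

Notation vec := 'rV[R]_n.

Definition pair (f x : vec) : R := \sum_(i < n) f 0 i * x 0 i.

Definition convex_cone (C : set vec) : Prop :=
  C 0 /\ (forall x y, C x -> C y -> C (x + y)) /\
  (forall (t : R) x, 0 <= t -> C x -> C (t *: x)).

(* proper cone: closed convex cone, containing no line,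
   not contained in a (linear) hyperplane *)
Definition proper_cone (C : set vec) : Prop :=
  [/\ closed C, convex_cone C,
      (forall x, C x -> C (- x) -> x = 0) &
      (forall w : vec, w != 0 -> exists2 x, C x & pair w x != 0)].

Definition dual_cone (C : set vec) : set vec :=
  [set f | forall x, C x -> 0 <= pair f x].

Definition conv_vec (A : set vec) : set vec :=
  [set x | exists N (lam : 'I_N -> R) (p : 'I_N -> vec),
     [/\ forall j, 0 <= lam j, \sum_(j < N) lam j = 1,
         forall j, A (p j) & x = \sum_(j < N) lam j *: p j]].

Definition polytope (P : set vec) : Prop :=
  exists s : seq vec, P = conv_vec [set x | x \in s].

Definition base (C : set vec) (phi : vec) : set vec :=
  [set x | C x /\ pair phi x = 1].

Variable k : nat.

(* tensors in (V^dual)^{⊗k} ⊗ V, in coordinates: the coefficient at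
   (i_1,...,i_k ; a) w.r.t. dual basis ⊗...⊗ dual basis ⊗ basis *)
Definition tens := ({ffun 'I_k -> 'I_n} * 'I_n)%type -> R.

Definition conv_tens (A : set tens) : set tens :=
  [set t | exists N (lam : 'I_N -> R) (p : 'I_N -> tens),
     [/\ forall j, 0 <= lam j, \sum_(j < N) lam j = 1,
         forall j, A (p j) & t = fun q => \sum_(j < N) lam j * p j q]].

Definition ptens (f : 'I_k -> vec) (v : vec) : tens :=
  fun q => (\prod_(l < k) f l 0 (q.1 l)) * v 0 q.2.

(* (C^dual)^{⊗min k} ⊗min C  (the iterated minimal tensor product) *)
Definition min_tens_cone (C : set vec) : set tens :=
  conv_tens [set t | exists (f : 'I_k -> vec) (v : vec),
     [/\ forall l, dual_cone C (f l), C v & t = ptens f v]].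

(* the k-th reduction map gamma_k^phi as a tensor in (V^dual)^{⊗k} ⊗ V:
   gamma(e_{i_1}⊗...⊗e_{i_k}) = 1/k sum_j (prod_{l<>j} phi(e_{i_l})) e_{i_j} *)
Definition gamma (phi : vec) : tens :=
  fun q => k%:R^-1 * \sum_(j < k)
     ((\prod_(l < k | l != j) phi 0 (q.1 l)) * (q.2 == q.1 j)%:R).

Definition entanglement_breaking (C : set vec) (phi : vec) : Prop :=
  min_tens_cone C (gamma phi).

End Defs.

From HB Require Import structures.
From mathcomp Require Import all_boot all_order all_algebra.
From mathcomp Require Import all_classical all_reals all_analysis.
From mathcomp Require Import ring.
Set Implicit Arguments. Unset Strict Implicit. Unset Printing Implicit Defensive.
Import Order.TTheory GRing.Theory Num.Theory numFieldNormedType.Exports.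
Local Open Scope classical_set_scope.
Local Open Scope ring_scope.

(* A tensor t in (V^* )^{(x)k} (x) V induces the polynomial map
   x |-> t(x, ..., x) from V to V.  For the reduction map gamma_k^phi this map
   is the identity on the hyperplane phi = 1, and for an elementary tensor
   f_1 (x) ... (x) f_k (x) v it is x |-> (prod_l f_l(x)) v.  Hence, if gamma is
   a convex combination of elementary tensors with f_l in C^* and v_j in C,
   every point x of K_phi is a nonnegative combination of the finitely many
   vectors v_j, with coefficients lam_j prod_l f_l(x) >= 0.  Since phi lies in
   the interior of C^*, phi(v) = 0 forces v = 0 for v in C, so each nonzero v_j
   can be rescaled to the point v_j / phi(v_j) of K_phi, and x is a convex
   combination of these points.  Conversely K_phi is convex, so it is exactly
   the convex hull of the finitely many normalized v_j. *)

Section Pairing.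
Variables (R : realType) (n : nat).
Implicit Types (f x y : 'rV[R]_n).

Lemma pairC f x : pair f x = pair x f.
Proof. by apply: eq_bigr => i _; rewrite mulrC. Qed.

Lemma pairD f x y : pair f (x + y) = pair f x + pair f y.
Proof. by rewrite /pair -big_split; apply: eq_bigr => i _; rewrite mxE mulrDr. Qed.

Lemma pairZ f (a : R) x : pair f (a *: x) = a * pair f x.
Proof. by rewrite /pair mulr_sumr; apply: eq_bigr => i _; rewrite mxE mulrCA. Qed.

Lemma pair0 f : pair f 0 = 0.
Proof. by rewrite -(scale0r 0) pairZ mul0r. Qed.

Lemma pairN f x : pair f (- x) = - pair f x.
Proof. by rewrite -scaleN1r pairZ mulN1r. Qed.

Lemma pair_sum I (r : seq I) (P : pred I) (F : I -> 'rV[R]_n) f :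
  pair f (\sum_(i <- r | P i) F i) = \sum_(i <- r | P i) pair f (F i).
Proof. exact: (big_morph (pair f) (pairD f) (pair0 f)). Qed.

Lemma pair_self_ge0 x : 0 <= pair x x.
Proof. by apply: sumr_ge0 => i _; rewrite -expr2 sqr_ge0. Qed.

Lemma pair_self_eq0 x : pair x x = 0 -> x = 0.
Proof.
rewrite /pair => x2_eq0; apply/rowP => j; rewrite mxE.
have sq_ge0 i : 0 <= x 0 i * x 0 i by rewrite -expr2 sqr_ge0.
by have /eqP := psumr_eq0P (fun i _ => sq_ge0 i) x2_eq0 (i := j) isT; rewrite mulf_eq0 orbb => /eqP.
Qed.

End Pairing.

Section ConeFacts.
Variables (R : realType) (n : nat) (C : set 'rV[R]_n) (phi : 'rV[R]_n).

(* A functional in the interior of the dual cone is strictly positive on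
   C \ {0}: otherwise phi - t v, for small t > 0, would leave the dual cone. *)
Lemma interior_dual_strict v :
  (dual_cone C)° phi -> C v -> pair phi v = 0 -> v = 0.
Proof.
move=> /nbhs_ballP [e /= e0 He] Cv pv0.
set t := e / (2 * (`|v| + 1)).
have v1 : 0 < `|v| + 1 by rewrite ltr_wpDl.
have t0 : 0 < t by rewrite divr_gt0 // mulr_gt0.
have near_phi : ball phi e (phi - t *: v).
  rewrite -ball_normE /= opprB addrC subrK normrZ gtr0_norm //.
  apply: (@le_lt_trans _ _ (t * (`|v| + 1))).
    by rewrite ler_wpM2l ?ltW // ltrDl ltr01.
  rewrite /t invfM mulrA -mulrA mulVf ?gt_eqF // mulr1.
  by rewrite ltr_pdivrMr ?ltr0n // ltr_pMr // ltr1n.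
have /(_ v Cv) : dual_cone C (phi - t *: v) by exact: He.
rewrite pairC pairD pairN pairZ (pairC v phi) pv0 add0r oppr_ge0 pmulr_rle0 //.
by move=> vv_le0; apply: pair_self_eq0; apply/eqP; rewrite eq_le vv_le0 pair_self_ge0.
Qed.

Definition normalize (v : 'rV[R]_n) : 'rV[R]_n := (pair phi v)^-1 *: v.

Lemma normalize_base v :
  convex_cone C -> dual_cone C phi -> C v -> pair phi v != 0 ->
  base C phi (normalize v).
Proof.
move=> [_ [_ CZ]] phiC Cv pv_neq0; split.
  by apply: CZ => //; rewrite invr_ge0; apply: phiC.
by rewrite /normalize pairZ mulVf.
Qed.

Lemma conv_base_sub (A : set 'rV[R]_n) :
  convex_cone C -> A `<=` base C phi -> conv_vec A `<=` base C phi.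
Proof.
move=> [C0 [CD CZ]] AK y [N [lam [p [lam0 lam1 Ap ->]]]].
have Kp j : base C phi (p j) by apply: AK.
split.
  by elim/big_ind: _ => // j _; apply: CZ => //; case: (Kp j).
rewrite pair_sum -lam1; apply: eq_bigr => j _.
by rewrite pairZ (proj2 (Kp j)) mulr1.
Qed.

Lemma cone_comb_in_conv N (mu : 'I_N -> R) (V : 'I_N -> 'rV[R]_n) :
  (dual_cone C)° phi -> (forall j, 0 <= mu j) -> (forall j, C (V j)) ->
  pair phi (\sum_j mu j *: V j) = 1 ->
  conv_vec [set y | y \in [seq normalize (V j) | j <- enum 'I_N & pair phi (V j) != 0]]
    (\sum_j mu j *: V j).
Proof.
move=> phiint mu0 CV px.
pose c j := pair phi (V j).
have c0 j : 0 <= c j by apply: (interior_subset phiint).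
have V0 j : c j = 0 -> V j = 0 by apply: interior_dual_strict.
have [j0 cj0] : exists j0, c j0 != 0.
  apply/not_existsP => all0; move: px.
  rewrite big1 ?pair0 => [/eqP|j _]; first by rewrite eq_sym oner_eq0.
  by rewrite V0 ?scaler0 //; apply/eqP/negbNE/negP/all0.
pose w j := if c j != 0 then normalize (V j) else normalize (V j0).
exists N, (fun j => mu j * c j), w; split.
- by move=> j; apply: mulr_ge0.
- by rewrite -px pair_sum; apply: eq_bigr => j _; rewrite pairZ.
- move=> j; rewrite /w; case: ifP => cj; apply/mapP.
    by exists j => //; rewrite mem_filter cj mem_enum.
  by exists j0 => //; rewrite mem_filter cj0 mem_enum.
- apply: eq_bigr => j _; rewrite /w /normalize; case: ifP => [cj|/negbFE/eqP cj].
    by rewrite scalerA mulfK.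
  by rewrite V0 // cj mulr0 !scale0r scaler0.
Qed.

End ConeFacts.

Section DiagonalEvaluation.
Variables (R : realType) (n k : nat).

(* The vector t(x, ..., x) obtained by feeding x to all k dual slots of t. *)
Definition eval_diag (t : tens R n k) (x : 'rV[R]_n) : 'rV[R]_n :=
  \row_a \sum_(i : {ffun 'I_k -> 'I_n}) t (i, a) * \prod_(l < k) x 0 (i l).

Lemma eval_diag_ptens (f : 'I_k -> 'rV[R]_n) (v x : 'rV[R]_n) :
  eval_diag (ptens f v) x = (\prod_(l < k) pair (f l) x) *: v.
Proof.
apply/rowP => a; rewrite !mxE /pair bigA_distr_bigA /= mulr_suml.
by apply: eq_bigr => i _; rewrite /ptens /= big_split /= mulrAC.
Qed.

Lemma eval_diag_conv N (lam : 'I_N -> R) (p : 'I_N -> tens R n k) x :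
  eval_diag (fun q => \sum_(j < N) lam j * p j q) x
  = \sum_(j < N) lam j *: eval_diag (p j) x.
Proof.
apply/rowP => a; rewrite !mxE summxE; under eq_bigr do rewrite mulr_suml.
rewrite exchange_big; apply: eq_bigr => j _; rewrite !mxE mulr_sumr.
by apply: eq_bigr => i _; rewrite mulrA.
Qed.

(* The j-th summand of gamma, evaluated on the diagonal, is
   (prod_{l <> j} phi(x)) x: the slot j keeps x, the others are contracted
   with phi.  This is a product over slots, expanded by distributivity. *)
Lemma gamma_summand (phi x : 'rV[R]_n) (j : 'I_k) (a : 'I_n) :
  \sum_(i : {ffun 'I_k -> 'I_n})
     (\prod_(l < k | l != j) phi 0 (i l) * (a == i j)%:R) * \prod_(l < k) x 0 (i l)
  = x 0 a * \prod_(l < k | l != j) pair phi x.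
Proof.
pose G (l : 'I_k) (m : 'I_n) :=
  if l == j then (a == m)%:R * x 0 m else phi 0 m * x 0 m.
have summand_prod (i : {ffun 'I_k -> 'I_n}) :
  (\prod_(l < k | l != j) phi 0 (i l) * (a == i j)%:R) * \prod_(l < k) x 0 (i l)
  = \prod_(l < k) G l (i l).
  rewrite [X in _ * X](bigD1 j) //= [RHS](bigD1 j) //= /G eqxx.
  rewrite [in RHS](eq_bigr (fun l => phi 0 (i l) * x 0 (i l))); last first.
    by move=> l /negbTE ->.
  by rewrite big_split /=; ring.
under eq_bigr do rewrite summand_prod.
rewrite -(bigA_distr_bigA G) (bigD1 j) //= {1}/G eqxx.
rewrite (bigD1 a) //= eqxx mul1r big1 ?addr0; last first.
  by move=> m; rewrite eq_sym => /negbTE ->; rewrite mul0r.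
by congr (_ * _); apply: eq_bigr => l /negbTE lj; rewrite /G lj.
Qed.

Lemma eval_diag_gamma (phi x : 'rV[R]_n) :
  (1 <= k)%N -> pair phi x = 1 -> eval_diag (@gamma R n k phi) x = x.
Proof.
move=> k_gt0 px; apply/rowP => a; rewrite mxE /gamma.
under eq_bigr do rewrite -mulrA mulr_suml.
rewrite -mulr_sumr exchange_big /=.
under eq_bigr do rewrite gamma_summand px big1_eq mulr1.
have kn : k%:R != 0 :> R by rewrite pnatr_eq0 -lt0n.
by rewrite sumr_const card_ord -mulr_natr; field.
Qed.

Lemma entanglement_breaking_finite_gen (C : set 'rV[R]_n) (phi : 'rV[R]_n) :
  (1 <= k)%N -> entanglement_breaking k C phi ->
  exists N (V : 'I_N -> 'rV[R]_n), (forall j, C (V j)) /\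
    forall x, base C phi x ->
      exists2 mu : 'I_N -> R, (forall j, 0 <= mu j) & x = \sum_j mu j *: V j.
Proof.
move=> k_gt0 [N [lam [p [lam0 _ Ap gam]]]].
have /choice [FV HFV] : forall j, exists fv : ('I_k -> 'rV[R]_n) * 'rV[R]_n,
    [/\ forall l, dual_cone C (fv.1 l), C fv.2 & p j = ptens fv.1 fv.2].
  by move=> j; have [f [v [? ? ?]]] := Ap j; exists (f, v).
exists N, (fun j => (FV j).2); split=> [j|x [Cx px]]; first by case: (HFV j).
exists (fun j => lam j * \prod_(l < k) pair ((FV j).1 l) x).
  move=> j; apply: mulr_ge0 => //; apply: prodr_ge0 => l _.
  by case: (HFV j) => dualF _ _; apply: dualF.
rewrite -{1}(eval_diag_gamma k_gt0 px) gam eval_diag_conv.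
apply: eq_bigr => j _; case: (HFV j) => _ _ ->.
by rewrite eval_diag_ptens scalerA.
Qed.

End DiagonalEvaluation.

Theorem lemma3 (R : realType) (n : nat) (C : set 'rV[R]_n) (phi : 'rV[R]_n)
  (k : nat) :
  proper_cone C -> (dual_cone C)° phi -> (1 <= k)%N ->
  entanglement_breaking k C phi ->
  polytope (base C phi).
Proof.
move=> [_ coneC _ _] phiint k_gt0 eb.
have [N [V [CV gen]]] := entanglement_breaking_finite_gen k_gt0 eb.
exists [seq normalize phi (V j) | j <- enum 'I_N & pair phi (V j) != 0].
apply/seteqP; split=> [x Kx|].
  have [mu mu0 xE] := gen x Kx.
  have [_ px] := Kx.
  by rewrite xE; apply: cone_comb_in_conv phiint mu0 CV _; rewrite -xE.
apply: conv_base_sub => // y /mapP [j]; rewrite mem_filter => /andP [pj _] ->.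
exact: normalize_base (interior_subset phiint) (CV j) pj.
Qed.
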